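(* Let $G$ be a $3$-regular graph and $\sigma$ a permutation of $E(G)$. Then $B(G,\sigma)$ is not odd if and only if there is a nonempty $2$-regular set of edges $C\subseteq E(G)$ in $G$ such that $\sigma(C)$ is also $2$-regular in $G$.
   Context: All graphs are finite, simple and undirected. A set of edges $C\subseteq E(G)$ is $2$-regular in $G$ if every vertex of $G$ is incident with exactly $0$ or exactly $2$ edges of $C$. $B(G,\sigma)$ is the bipartite graph with parts $V_B=V(G)\times\{0,1\}$ and $W_B=E(G)$ and edge set $\{\{(v,0),e\}: v\in e\}\cup\{\{(v,1),e\}: v\in\sigma(e)\}$. A bipartite graph with parts $V,W$ in which every vertex of $V$ has degree $3$ is called odd if for every nonempty $X\subseteq W$ there is some $v\in V$ with $|X\cap N(v)|$ odd; otherwise it is called even (not odd). *)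

From mathcomp Require Import all_boot all_fingroup.
Set Implicit Arguments. Unset Strict Implicit. Unset Printing Implicit Defensive.

Definition simple_graph (V : finType) (g : rel V) : Prop :=
  symmetric g /\ irreflexive g.

Definition is_edge (V : finType) (g : rel V) (e : {set V}) : bool :=
  (#|e| == 2) && [forall x in e, forall y in e, (x != y) ==> g x y].

Definition edge (V : finType) (g : rel V) : finType :=
  {e : {set V} | is_edge g e}.

Definition cubic (V : finType) (g : rel V) : Prop :=
  forall v : V, #|[set w | g v w]| = 3.

Definition two_regular (V : finType) (g : rel V) (C : {set edge g}) : Prop :=
  forall v : V, let d := #|[set e in C | v \in val e]| in d = 0 \/ d = 2.

(* Adjacency of B(G, sigma): vertex (v, b) of V x {0,1} and edge e of G.
   b = false stands for 0, b = true for 1. *)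
Definition B_adj (V : finType) (g : rel V) (sigma : {perm edge g})
  (vb : V * bool) (e : edge g) : bool :=
  if vb.2 then vb.1 \in val (sigma e) else vb.1 \in val e.

Definition odd_bip (VB WB : finType) (adj : VB -> WB -> bool) : Prop :=
  forall X : {set WB}, X != set0 ->
    exists v : VB, odd #|[set w in X | adj v w]|.

From mathcomp Require Import all_boot all_fingroup.
Set Implicit Arguments. Unset Strict Implicit. Unset Printing Implicit Defensive.

(* B(G, sigma) is even iff some nonempty set X of edges meets every
   neighbourhood evenly.  The neighbourhood of (v, 0) meets X in the edges of
   X at v, that of (v, 1) in the edges of sigma(X) at v.  In a cubic graph a
   vertex is incident with at most 3 edges, so "even" means "0 or 2", i.e.
   X and sigma(X) are both 2-regular. *)

Definition incident (V : finType) (g : rel V) (C : {set edge g}) (v : V) :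
  {set edge g} := [set e in C | v \in val e].

Lemma edge_at_vertexP (V : finType) (g : rel V) (e : edge g) (v : V) :
  v \in val e -> exists2 w, g v w & val e = [set v; w].
Proof.
case/andP: (valP e) => /cards2P [x [y [xy ->]]] /forallP adj.
have adj_e a b : a \in [set x; y] -> b \in [set x; y] -> a != b -> g a b.
  by move=> ae be ab; move/(_ a): adj => /implyP /(_ ae) /forallP /(_ b) /implyP /(_ be) /implyP /(_ ab).
rewrite !inE => /orP [] /eqP ->.
- by exists y; rewrite ?adj_e ?set21 ?set22.
- by exists x; rewrite ?adj_e ?set21 ?set22 1?eq_sym // setUC.
Qed.

Lemma card_incident_le_deg (V : finType) (g : rel V) (C : {set edge g}) (v : V) :
  #|incident C v| <= #|[set w | g v w]|.
Proof.
have sub : val @: incident C v \subset (fun w => [set v; w]) @: [set w | g v w].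
  apply/subsetP => _ /imsetP [e + ->]; rewrite inE => /andP [_ /edge_at_vertexP [w vw ->]].
  by apply/imsetP; exists w; rewrite ?inE.
rewrite -(card_imset _ val_inj).
exact: leq_trans (subset_leq_card sub) (leq_imset_card _ _).
Qed.

Lemma cubic_two_regularE (V : finType) (g : rel V) (C : {set edge g}) :
  cubic g -> two_regular C <-> forall v, ~~ odd #|incident C v|.
Proof.
move=> cub; split => [reg v | even v]; first by case: (reg v) => ->.
have := card_incident_le_deg C v; rewrite cub.
by move: (even v); rewrite /incident; case: #|_| => [|[|[|[|]]]]; auto.
Qed.

Lemma odd_bipPn (VB WB : finType) (adj : VB -> WB -> bool) :
  ~ odd_bip adj <->
  exists2 X : {set WB}, X != set0 & forall v, ~~ odd #|[set w in X | adj v w]|.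
Proof.
split => [not_odd | [X X0 even] odd_adj]; last first.
  by have [v] := odd_adj X X0; rewrite (negPf (even v)).
case: (boolP [exists X : {set WB}, (X != set0) &&
                [forall v, ~~ odd #|[set w in X | adj v w]|]]).
  by case/existsP => X /andP [X0 /forallP even]; exists X.
move/existsPn => no_even; case: not_odd => X X0.
by have /nandP [/negP // | /forallPn [v /negbNE]] := no_even X; exists v.
Qed.

Lemma card_B_adj_true (V : finType) (g : rel V) (sigma : {perm edge g})
    (X : {set edge g}) (v : V) :
  #|[set e in X | B_adj sigma (v, true) e]| = #|incident (sigma @: X) v|.
Proof.
rewrite -(card_imset _ (@perm_inj _ sigma)); congr #|pred_of_set _|.
apply/setP => e; rewrite !inE; apply/imsetP/andP.
- by case=> x; rewrite inE => /andP [xX vx] ->; rewrite imset_f.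
- by case=> /imsetP [x xX ->] vx; exists x; rewrite // inE xX.
Qed.

Theorem mainTheorem5 (V : finType) (g : rel V) (sigma : {perm edge g}) :
  simple_graph g -> cubic g ->
  (~ odd_bip (B_adj sigma) <->
   exists C : {set edge g},
     [/\ C != set0, two_regular C & two_regular (sigma @: C)]).
Proof.
move=> _ cub.
have evenE (X : {set edge g}) :
    (forall vb, ~~ odd #|[set e in X | B_adj sigma vb e]|) <->
    two_regular X /\ two_regular (sigma @: X).
  split => [even | [/(cubic_two_regularE _ cub) even /(cubic_two_regularE _ cub) even_sigma] [v []]].
  - split; apply/cubic_two_regularE => // v; first exact: even (v, false).
    by rewrite -card_B_adj_true; exact: even.
  - by rewrite card_B_adj_true.
  - exact: even.
split => [/odd_bipPn [X X0 /evenE [reg reg_sigma]] | [C [C0 reg reg_sigma]]].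
  by exists X.
by apply/odd_bipPn; exists C => //; apply/evenE.
Qed.
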